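(* Let $M$ be a manifold, $l>0$, and let $A,B,C$ be pairwise disjoint finite sets with $A\neq\emptyset$. Then the map $$\mu:D_{A,B,C}(M,S^{2l})\to D_{A\cup B}(M,S^{2l})\wedge D_{A\cup C}(M,S^{2l}),\qquad (\xi_A,\xi_B,\xi_C)\mapsto(\xi_A\cup\xi_B,\ \xi_A\cup\xi_C)$$ is based null-homotopic.
   Context: For a finite set $S$, $F_S(M)$ is the space of injective maps $S\to M$ (ordered configurations labelled by $S$). For a sequence $\mathcal I=(I_1,\dots,I_k)$ of pairwise disjoint finite sets and a based space $(X,x_0)$, $D_{\mathcal I}(M,X)=\big(F_{\sqcup_i I_i}(M)\times_{\prod_i\mathrm{Sym}(I_i)}X^{\sqcup_i I_i}\big)/\sim$, where $\prod_i\mathrm{Sym}(I_i)$ acts diagonally by permuting coordinates and $\sim$ collapses to a single basepoint $\infty$ all elements with some label equal to $x_0$. Thus an element of $D_{A,B,C}(M,X)$ is a triple $(\xi_A,\xi_B,\xi_C)$ of labelled configurations of sizes $|A|,|B|,|C|$ with all points distinct, each unordered within its colour; $D_{A\cup B}(M,X)$ is the one-colour version for the set $A\cup B$. Here $S^{2l}$ is based at some point $x_0$ (e.g. the point at infinity of $\mathbb R^{2l}\cup\{\infty\}$). *)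

From HB Require Import structures.
From mathcomp Require Import all_boot all_order all_algebra all_fingroup.
From mathcomp Require Import generic_quotient.
From mathcomp Require Import all_classical all_reals all_analysis.

Set Implicit Arguments.
Unset Strict Implicit.
Unset Printing Implicit Defensive.

Import Order.TTheory GRing.Theory Num.Theory.
Import numFieldNormedType.Exports.
Local Open Scope classical_set_scope.
Local Open Scope ring_scope.
Local Open Scope quotient_scope.

Definition locally_euclidean (R : realType) (d : nat) (M : topologicalType) :=
  forall x : M, exists (U : set M) (f : M -> 'rV[R]_d) (g : 'rV[R]_d -> M),
    [/\ open U, U x, open (f @` U), {within U, continuous f} &
        {within f @` U, continuous g} /\ forall y, U y -> g (f y) = y].

Definition topological_manifold (R : realType) (d : nat) (M : topologicalType) :=
  [/\ hausdorff_space M, @second_countable M & locally_euclidean R d M].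

Definition sphere (R : realType) (n : nat) : topologicalType :=
  one_point_compactification 'rV[R]_n.
Definition sphere_pt (R : realType) (n : nat) : sphere R n := None.

Section Dspace.
Variables (T : finType) (M X : topologicalType) (x0 : X) (Is : seq {set T}).

Definition Sset : {set T} := \bigcup_(I <- Is) I.
Definition Slab : finType := {t : T | t \in Sset}.

Definition conf_raw : topologicalType :=
  ({ptws Slab -> M} * {ptws Slab -> X})%type.
Definition Fraw : topologicalType := set_type [set p : conf_raw | injective p.1].

(* add a disjoint point (so that the collapsed set is never empty) *)
Definition DrawFam (b : bool) : topologicalType :=
  if b then Fraw else discrete_topology unit.
Definition Draw : topologicalType := {b : bool & DrawFam b}.

Definition Dcase (p : Draw) : option Fraw :=
  match p with
  | existT b u =>
    (if b as b0 return DrawFam b0 -> option Fraw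
     then fun u => Some u else fun _ => None) u
  end.

Definition colour_preserving (s : {perm Slab}) :=
  forall (i : Slab) (I : {set T}), I \in Is -> (val (s i) \in I) = (val i \in I).

Definition based (p : Draw) :=
  match Dcase p with
  | Some u => exists i, (val u).2 i = x0
  | None => True
  end.

Definition Drel (p q : Draw) : Prop :=
  (based p /\ based q) \/
  exists (u v : Fraw) (s : {perm Slab}),
    [/\ Dcase p = Some u, Dcase q = Some v, colour_preserving s &
        forall i, (val u).1 i = (val v).1 (s i) /\ (val u).2 i = (val v).2 (s i)].

Lemma Dcase_inj p q u : Dcase p = Some u -> Dcase q = Some u -> p = q.
Proof.
case: p => [[] pu] //=; case: q => [[] qu] //= [->] [->] //.
Qed.

Lemma based_perm (u v : Fraw) (s : {perm Slab}) :
  (forall i, (val u).2 i = (val v).2 (s i)) ->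
  (exists i, (val u).2 i = x0) <-> (exists i, (val v).2 i = x0).
Proof.
move=> h; split=> -[i hi].
  by exists (s i); rewrite -h.
by exists (s^-1 i)%g; rewrite h permKV.
Qed.

Lemma Drel_refl p : Drel p p.
Proof.
case E: (Dcase p) => [u|].
  right; exists u, u, 1%g; split => //.
    by move=> i I _; rewrite perm1.
  by move=> i; rewrite perm1.
by left; rewrite /based E.
Qed.

Lemma Drel_sym p q : Drel p q -> Drel q p.
Proof.
case=> [[bp bq]|[u [v [s [pu qv cs h]]]]]; first by left.
right; exists v, u, (s^-1)%g; split => //.
  by move=> i I hI; rewrite -(cs _ _ hI) permKV.
by move=> i; have [h1 h2] := h ((s^-1)%g i); rewrite permKV in h1 h2.
Qed.

Lemma Drel_trans p q r : Drel p q -> Drel q r -> Drel p r.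
Proof.
case=> [[bp bq]|[u [v [s [pu qv cs h]]]]];
case=> [[bq' br]|[v' [w [t [qv' rw ct h']]]]].
- by left.
- left; split => //; move: bq; rewrite /based qv' rw.
  by have [] := based_perm (fun i => proj2 (h' i)).
- left; split => //; move: bq'; rewrite /based pu qv.
  by have [] := based_perm (fun i => proj2 (h i)).
- rewrite qv in qv'; case: qv' => <- in h'.
  right; exists u, w, (s * t)%g; split => //.
    by move=> i I hI; rewrite permM (ct _ _ hI) (cs _ _ hI).
  move=> i; rewrite permM; have [h1 h2] := h i; have [h3 h4] := h' (s i).
  by rewrite h1 h2 h3 h4.
Qed.

Definition Drelb (p q : Draw) : bool := `[< Drel p q >].

Lemma Drelb_refl : reflexive Drelb.
Proof. by move=> p; apply/asboolP; exact: Drel_refl. Qed.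
Lemma Drelb_sym : symmetric Drelb.
Proof.
move=> p q; apply/idP/idP => /asboolP h; apply/asboolP; exact: Drel_sym.
Qed.
Lemma Drelb_trans : transitive Drelb.
Proof.
move=> q p r /asboolP h1 /asboolP h2; apply/asboolP; exact: Drel_trans h2.
Qed.

Definition Drel_equiv := EquivRel Drelb Drelb_refl Drelb_sym Drelb_trans.

Definition Dsp := {eq_quot Drel_equiv}.
HB.instance Definition _ := Topological.copy Dsp (quotient_topology Dsp).
HB.instance Definition _ := Quotient.on Dsp.

Definition Dpt : Dsp := \pi_Dsp (existT DrawFam false (tt : discrete_topology unit)).

Definition Dclass (u : Fraw) : Dsp := \pi_Dsp (existT DrawFam true u).

End Dspace.

Section Smash.
Variables (Y Z : topologicalType) (y0 : Y) (z0 : Z).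

Definition srel (p q : (Y * Z)%type) : Prop :=
  p = q \/ ((p.1 = y0 \/ p.2 = z0) /\ (q.1 = y0 \/ q.2 = z0)).

Definition srelb p q : bool := `[< srel p q >].
Lemma srelb_refl : reflexive srelb.
Proof. by move=> p; apply/asboolP; left. Qed.
Lemma srelb_sym : symmetric srelb.
Proof.
move=> p q; apply/idP/idP => /asboolP h; apply/asboolP;
  (case: h => [->|[h1 h2]]; [left | right]) => //.
Qed.
Lemma srelb_trans : transitive srelb.
Proof.
move=> q p r /asboolP h1 /asboolP h2; apply/asboolP.
case: h1 => [->//|[hp hq]]; case: h2 => [<-|[_ hr]]; by right.
Qed.
Definition srel_equiv := EquivRel srelb srelb_refl srelb_sym srelb_trans.

Definition smash := {eq_quot srel_equiv}.
HB.instance Definition _ := Topological.copy smash (quotient_topology smash).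
HB.instance Definition _ := Quotient.on smash.

Definition smash_pt : smash := \pi_smash (y0, z0).
Definition smash_pair (y : Y) (z : Z) : smash := \pi_smash (y, z).
End Smash.

Section Restrict.
Variables (T : finType) (M X : topologicalType) (Is Js : seq {set T}).
Hypothesis hIJ : Sset Is \subset Sset Js.

Definition lab_emb (t : Slab Is) : Slab Js :=
  exist _ (val t) (fintype.subsetP hIJ _ (valP t)).

Lemma lab_emb_inj : injective lab_emb.
Proof. by move=> a b /(congr1 val) /= /val_inj. Qed.

Lemma restr_inj (u : Fraw M X Js) :
  injective (fun t => (val u).1 (lab_emb t)).
Proof.
move=> a b h; apply: lab_emb_inj.
have hu : injective (val u).1 by have := proj2_sig u; rewrite in_setE.
exact: hu h.
Qed.

Definition restr (u : Fraw M X Js) : Fraw M X Is :=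
  exist _ ((fun t => (val u).1 (lab_emb t)), (fun t => (val u).2 (lab_emb t)))
        (mem_set (@restr_inj u)).
End Restrict.

Section Mu.
Variables (T : finType) (M X : topologicalType) (x0 : X) (A B C : {set T}).

Lemma subAB : Sset [:: A :|: B] \subset Sset [:: A; B; C].
Proof.
apply/fintype.subsetP => t; rewrite /Sset !big_cons !big_nil !inE.
by case: (t \in A); case: (t \in B); case: (t \in C).
Qed.

Lemma subAC : Sset [:: A :|: C] \subset Sset [:: A; B; C].
Proof.
apply/fintype.subsetP => t; rewrite /Sset !big_cons !big_nil !inE.
by case: (t \in A); case: (t \in B); case: (t \in C).
Qed.

Definition D_ABC : topologicalType := Dsp M x0 [:: A; B; C].
Definition D_AB : topologicalType := Dsp M x0 [:: A :|: B].
Definition D_AC : topologicalType := Dsp M x0 [:: A :|: C].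

Definition smash_target : topologicalType :=
  smash (Dpt M x0 [:: A :|: B]) (Dpt M x0 [:: A :|: C]).

Definition target_pt : smash_target :=
  smash_pt (Dpt M x0 [:: A :|: B]) (Dpt M x0 [:: A :|: C]).

(* defined on representatives; independent of the representative *)
Definition mu (q : D_ABC) : smash_target :=
  match Dcase (repr (q : Dsp M x0 [:: A; B; C])) with
  | Some u => smash_pair (Dpt M x0 [:: A :|: B]) (Dpt M x0 [:: A :|: C])
                (Dclass x0 (restr subAB u)) (Dclass x0 (restr subAC u))
  | None => target_pt
  end.

End Mu.

From HB Require Import structures.
From mathcomp Require Import all_boot all_order all_algebra all_fingroup.
From mathcomp Require Import generic_quotient.
From mathcomp Require Import all_classical all_reals all_analysis.
From mathcomp Require Import lra.
Import Order.TTheory GRing.Theory Num.Theory.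
Import numFieldNormedType.Exports.

Set Implicit Arguments.
Unset Strict Implicit.
Unset Printing Implicit Defensive.

Local Open Scope classical_set_scope.
Local Open Scope ring_scope.
Local Open Scope quotient_scope.

(* Fix a coordinate [i0] of R^(2l) and a sign [sg = +-1]. The based homotopy
   [push i0 sg] of the identity of S^(2l) moves [x] by [t / (1 - t + max (sg x_i0) 0)]
   in the direction [-sg e_i0]: at [t = 1] it sends the half-space
   [sg x_i0 <= 0] to the point at infinity, continuously because nearby points
   are pushed arbitrarily far away. Deform [mu] by applying [push i0 1] to the
   labels of [xi_A u xi_B] and [push i0 (-1)] to those of [xi_A u xi_C]. At time 1
   the label of a point of [xi_A] (there is one, as [A] is nonempty) lies in one
   of the two half-spaces, so one of the two smash factors is the basepoint. The
   deformation descends to [D_{A,B,C} x [0, 1]] because [[0, 1]] is compact. *)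

Lemma box_continuous {X Y Z : topologicalType} (F : X * Y -> Z) :
  (forall x y W, nbhs (F (x, y)) W -> exists U V,
     [/\ nbhs x U, nbhs y V & forall a b, U a -> V b -> W (F (a, b))]) ->
  continuous F.
Proof.
move=> h [x y] W /= /h [U [V [nU nV sub]]].
by exists (U, V) => // -[a b] [/= Ua Vb]; exact: sub.
Qed.

Lemma set_val_nbhs {T : topologicalType} (A : set T) (t : set_type A) (V : set T) :
  nbhs (sval t) V -> nbhs t [set s : set_type A | V (sval s)].
Proof. exact: (@initial_continuous _ _ set_val t). Qed.

Lemma ptws_cvg {U : eqType} {V : topologicalType} (F : set_system (U -> V))
    {FF : Filter F} (f : U -> V) :
  (forall u, (fun g => g u) @ F --> f u) -> F --> (f : {ptws U -> V}).
Proof.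
move=> h; apply/cvg_sup => i A /= [B [[W oW <-] /= Wfi sub]].
by apply: filterS sub _; apply: (h i W); exact: open_nbhs_nbhs.
Qed.

Section UnitInterval.
Variable R : realType.
Local Notation I01 := (set_type (`[0, 1]%classic : set R)).

Lemma I01_ge0 (t : I01) : 0 <= sval t.
Proof. by case: t => t /= /set_mem; rewrite /= in_itv /= => /andP[]. Qed.

Lemma I01_le1 (t : I01) : sval t <= 1.
Proof. by case: t => t /= /set_mem; rewrite /= in_itv /= => /andP[]. Qed.

Lemma clamp_subproof (r : R) : Num.min (Num.max r 0) 1 \in (`[0, 1]%classic : set R).
Proof.
apply/mem_set; rewrite /= in_itv /= le_min ler01 le_max lexx orbT /=.
by rewrite ge_min lexx orbT.
Qed.

Definition clamp (r : R) : I01 := exist _ (Num.min (Num.max r 0) 1) (clamp_subproof r).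

Lemma val_clamp (r : R) : 0 <= r <= 1 -> sval (clamp r) = r.
Proof. by case/andP=> r0 r1 /=; rewrite (max_idPl r0); exact/min_idPl. Qed.

Lemma clampK (s : I01) : clamp (sval s) = s.
Proof. by apply: val_inj; apply: val_clamp; rewrite I01_ge0 I01_le1. Qed.

Lemma clamp_continuous : continuous clamp.
Proof.
apply: (@continuous_comp_initial _ _ _ set_val) => r /=.
have max0 : {for r, continuous (fun x : R => Num.max x 0)}.
  by apply: (@continuous_max R R id (fun=> 0)); [exact: cvg_id | exact: cvg_cst].
have min1 : {for Num.max r 0, continuous (fun x : R => Num.min x 1)}.
  by apply: (@continuous_min R R id (fun=> 1)); [exact: cvg_id | exact: cvg_cst].
exact: continuous_comp max0 min1.
Qed.

Lemma I01_segment_nbhs (t : I01) (V : set I01) : nbhs t V ->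
  exists a b : R, [/\ 0 <= a, b <= 1, (forall s : I01, a <= sval s <= b -> V s)
                    & nbhs t [set s : I01 | a <= sval s <= b]].
Proof.
move=> Vt; have : nbhs (sval t) (clamp @^-1` V).
  by apply: clamp_continuous; rewrite /= clampK.
case/nbhs_normP => e /= e0 he.
exists (Num.max (sval t - e / 2) 0), (Num.min (sval t + e / 2) 1).
split; first by rewrite le_max lexx orbT.
- by rewrite ge_min lexx orbT.
- move=> s; rewrite ge_max le_min => /andP[/andP[s1 _] /andP[s2 _]].
  have ts : `|sval t - sval s| < e by rewrite ltr_norml; apply/andP; split; lra.
  by rewrite -(clampK s); exact: he.
- have near_t : nbhs t [set s : I01 | `|sval t - sval s| < e / 2].
    apply: (@set_val_nbhs _ _ t (fun r => `|sval t - r| < e / 2)).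
    have : (fun r : R => r) @ nbhs (sval t) --> sval t by exact: cvg_id.
    by move/cvgr_dist_lt => /(_ (e / 2)); apply; rewrite divr_gt0.
  apply: filterS near_t => s /=; rewrite ltr_norml ge_max le_min => /andP[h1 h2].
  by rewrite I01_ge0 I01_le1 /= andbT; apply/andP; split; lra.
Qed.

Lemma open_segment_tube {S Z : topologicalType} (G : S * I01 -> Z) (W : set Z) (a b : R) :
  continuous G -> open W -> 0 <= a -> b <= 1 ->
  open [set p : S | forall s : I01, a <= sval s <= b -> W (G (p, s))].
Proof.
move=> cG oW a0 b1; rewrite openE => p0 /= segW.
have /compact_near_coveringP := @segment_compact R a b.
move=> /(_ S (nbhs p0) (fun p r => W (G (p, clamp r))) _) cover.
have : \forall p \near p0, forall r, `[a, b]%classic r -> W (G (p, clamp r)).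
  apply: cover => r /=; rewrite in_itv /= => abr.
  have Wr : W (G (p0, clamp r)) by apply: segW; rewrite val_clamp //; lra.
  have /cG [[U V] [/= nU nV] UVW] : nbhs (G (p0, clamp r)) W.
    exact: open_nbhs_nbhs.
  exists (clamp @^-1` V, U) => [|[r' p] [/= Vr' Up]].
    by split => //; exact: clamp_continuous.
  exact: (UVW (p, clamp r')).
by apply: filterS => p hp s hs; rewrite -(clampK s); apply: hp; rewrite /= in_itv.
Qed.

Lemma quotient_prod_continuous {S Q Z : topologicalType} (pi : S -> Q) (rep : Q -> S)
    (G : S * I01 -> Z) :
  cancel rep pi -> (forall U : set Q, open (pi @^-1` U) -> open U) ->
  continuous G -> (forall p p' s, pi p = pi p' -> G (p, s) = G (p', s)) ->
  continuous (fun z : Q * I01 => G (rep z.1, z.2)).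
Proof.
move=> repK pi_open cG G_pi; apply: box_continuous => q t W /=.
rewrite nbhsE => -[W' [oW' W'q] W'W].
have Gq : nbhs t [set s : I01 | W' (G (rep q, s))].
  have pair_q : (fun s : I01 => (rep q, s)) @ nbhs t --> (rep q, t).
    have cst_q : (fun=> rep q) @ nbhs t --> rep q by exact: cvg_cst.
    exact: (cvg_pair cst_q cvg_id).
  have W'_nbhs : nbhs (G (rep q, t)) W' by exact: open_nbhs_nbhs.
  exact: (continuous_comp pair_q (@cG (rep q, t)) W'_nbhs).
have [a [b [a0 b1 segW' t_seg]]] := I01_segment_nbhs Gq.
(* The tube over [[a, b]] is open by compactness and [pi]-saturated. *)
pose O := [set p : S | forall s : I01, a <= sval s <= b -> W' (G (p, s))].
have pi_O : pi @^-1` [set q' | O (rep q')] = O.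
  apply/seteqP; split => p /= Op s hs.
    by rewrite -(G_pi _ _ _ (repK (pi p))); exact: Op.
  by rewrite (G_pi _ _ _ (repK (pi p))); exact: Op.
exists [set q' | O (rep q')], [set s : I01 | a <= sval s <= b]; split => //.
- apply: open_nbhs_nbhs; split; last exact: segW'.
  by apply: pi_open; rewrite pi_O; exact: (open_segment_tube cG oW' a0 b1).
- by move=> q' s Oq' hs; apply: W'W; exact: Oq'.
Qed.
End UnitInterval.

Section SphereNeighbourhoods.
Variables (R : realType) (n : nat).

Lemma rV_coord_le_norm (w : 'rV[R]_n) j : `|w ord0 j| <= `|w|.
Proof.
have /mapP[k _ ->] : `|w ord0 j| \in [seq `|w x.1 x.2| | x : 'I_1 * 'I_n].
  by apply/mapP; exists (ord0, j) => //=; rewrite mem_enum.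
by rewrite [leRHS]/Num.norm /= mx_normrE; apply/bigmax_geP; right; exists k.
Qed.

Lemma compact_rV_coord_bounded (K : set 'rV[R]_n) : compact K ->
  exists r, 0 <= r /\ forall w j, K w -> `|w ord0 j| <= r.
Proof.
move=> /compact_bounded [M [_ KM]].
exists (Num.max (M + 1) 0); split; first by rewrite le_max lexx orbT.
move=> w j Kw; apply: le_trans (rV_coord_le_norm w j) _.
by apply: KM Kw; rewrite lt_max ltrDl ltr01.
Qed.

Lemma sphere_infty_nbhs_coord (W : set (sphere R n)) : nbhs (None : sphere R n) W ->
  exists r, 0 <= r /\ forall (v : 'rV[R]_n) j, r < `|v ord0 j| -> W (Some v).
Proof.
case=> K [cK _] KW; have [r [r0 Kr]] := compact_rV_coord_bounded cK.
exists r; split => // v j rv; apply: KW; left; exists v => // Kv.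
by have := Kr v j Kv; rewrite leNgt rv.
Qed.

Lemma sphere_infty_nbhs (r : R) : nbhs (None : sphere R n)
  [set z : sphere R n | if z is Some v then exists j, r < `|v ord0 j| else True].
Proof.
pose K := [set v : 'rV[R]_n | forall j, `[- r, r]%classic (v ord0 j)].
have cK : compact K.
  apply: (@rV_compact _ _ (fun=> `[- r, r]%classic)) => _; exact: segment_compact.
exists K; first by split => //; exact: compact_closed (@norm_hausdorff _ _) cK.
move=> z [[v nKv <-]|-> //]; move/existsNP: nKv => [j nKv]; exists j.
by rewrite ltNge; apply/negP => vr; apply: nKv; rewrite /= in_itv /= -ler_norml.
Qed.
End SphereNeighbourhoods.

(* For [u = sg * x_i0], [u - s / (1 - s + max u 0)] is [sg] times the [i0]-th
   coordinate of [push_vec x s] below (see [norm_push_vec_dir]). *)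
Section PushEstimates.
Variable R : realType.

Lemma push_escape_far (r u s : R) : 0 <= r -> 0 <= s <= 1 -> r + 1 < `|u| ->
  0 < 1 - s + Num.max u 0 -> r < `|u - s / (1 - s + Num.max u 0)|.
Proof.
move=> r0 /andP[s0 s1] ru; set d := _ + _ => d0.
have sd0 : 0 <= s / d by rewrite divr_ge0 // ltW.
move: ru; rewrite !ltr_normr => /orP[ur|ur]; apply/orP; [left|right]; last by lra.
have umax : u <= Num.max u 0 by rewrite le_max lexx.
have : s / d <= 1 by rewrite ler_pdivrMr // mul1r /d; lra.
lra.
Qed.

Lemma push_escape_collapse (r : R) : 0 <= r -> exists2 e : R, 0 < e &
  forall u s, u < e -> 1 - e < s <= 1 -> 0 < 1 - s + Num.max u 0 ->
    r < `|u - s / (1 - s + Num.max u 0)|.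
Proof.
move=> r0; pose e := 1 / (4 * (r + 1)).
have e0 : 0 < e by rewrite divr_gt0 //; lra.
have eK : (r + 1) * e = 1 / 4.
  have r1 : r + 1 != 0 by apply: lt0r_neq0; lra.
  by rewrite /e !div1r invfM mulrCA mulfV // mulr1.
exists e => // u s ue /andP[es s1]; set d := _ + _ => d0.
have maxe : Num.max u 0 < e by rewrite gt_max ue e0.
have ed : (r + 1) * d < (r + 1) * (2 * e) by rewrite ltr_pM2l /d; lra.
have re0 := mulr_ge0 r0 (ltW e0).
have : r + 1 < s / d by rewrite ltr_pdivlMr //; lra.
by rewrite ltr_normr => ?; apply/orP; right; lra.
Qed.
End PushEstimates.

Section PushHomotopy.
Variables (R : realType) (n : nat) (i0 : 'I_n) (sg : R).
Hypothesis sg_norm1 : `|sg| = 1.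
Local Notation I01 := (set_type (`[0, 1]%classic : set R)).

Definition push_denom (x : 'rV[R]_n) (t : R) := 1 - t + Num.max (sg * x ord0 i0) 0.

Definition push_vec (x : 'rV[R]_n) (t : R) : 'rV[R]_n :=
  x - (sg * (t / push_denom x t)) *: delta_mx 0 i0.

Definition push (p : sphere R n * I01) : sphere R n :=
  if p.1 is Some x then
    if push_denom x (sval p.2) == 0 then None else Some (push_vec x (sval p.2))
  else None.

Lemma push_vec_coord x t j : j != i0 -> push_vec x t ord0 j = x ord0 j.
Proof. by move=> ji; rewrite !mxE (negbTE ji) andbF mulr0 subr0. Qed.

Lemma norm_push_vec_dir x t :
  `|push_vec x t ord0 i0| = `|sg * x ord0 i0 - t / push_denom x t|.
Proof.
have sg2 : sg * sg = 1 by rewrite -expr2 -real_normK ?num_real // sg_norm1 expr1n.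
by rewrite -[LHS]mul1r -sg_norm1 -normrM !mxE !eqxx mulr1 mulrBr !mulrA sg2 mul1r.
Qed.

Lemma push_denom_ge0 x (t : I01) : 0 <= push_denom x (sval t).
Proof.
have := I01_le1 t; have : 0 <= Num.max (sg * x ord0 i0) 0 by rewrite le_max lexx orbT.
rewrite /push_denom; lra.
Qed.

Lemma push_denom_cvg x t :
  (fun z : 'rV[R]_n * R => push_denom z.1 z.2) @ nbhs (x, t) --> push_denom x t.
Proof.
apply: cvgD; first by apply: cvgB; [exact: cvg_cst | exact: cvg_snd].
apply: (@continuous_max R _ (fun z : 'rV[R]_n * R => sg * z.1 ord0 i0) (fun=> 0) (x, t)).
  apply: cvgM; first exact: cvg_cst.
  apply: (@cvg_comp _ _ _ fst (fun y : 'rV[R]_n => y ord0 i0)); first exact: cvg_fst.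
  exact: coord_continuous.
exact: cvg_cst.
Qed.

Lemma push_vec_cvg x t : push_denom x t != 0 ->
  (fun z : 'rV[R]_n * R => push_vec z.1 z.2) @ nbhs (x, t) --> push_vec x t.
Proof.
move=> d0; apply: cvgB; first exact: cvg_fst.
apply: cvgZ; last exact: cvg_cst.
apply: cvgM; first exact: cvg_cst.
by apply: cvgM; [exact: cvg_snd | apply: cvgV => //; exact: push_denom_cvg].
Qed.

Lemma push_continuous_finite x (t : I01) : push_denom x (sval t) != 0 ->
  {for (Some x : sphere R n, t), continuous push}.
Proof.
move=> d0 W; have -> : push (Some x, t) = Some (push_vec x (sval t)).
  by rewrite /push /= (negbTE d0).
move=> Wx; have Wpush := push_vec_cvg d0 Wx.
have dpush : \forall z \near (x, sval t), push_denom z.1 z.2 != 0.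
  exact: cvgr_neq0 _ (@push_denom_cvg x (sval t)) d0.
have : \forall z \near (x, sval t),
    push_denom z.1 z.2 != 0 /\ W (Some (push_vec z.1 z.2)).
  by near=> z; split; near: z.
case=> -[U V] [/= nU nV] UV.
exists (Some @` U, [set s : I01 | V (sval s)]).
  by split; [exact: one_point_compactification_some_nbhs | exact: set_val_nbhs].
move=> [_ s] [/= [y Uy <-] Vs]; have [/negbTE dn Wy] := UV (y, sval s) (conj Uy Vs).
by rewrite /push /= dn.
Unshelve. all: by end_near.
Qed.

Lemma push_continuous_collapse x (t : I01) : push_denom x (sval t) = 0 ->
  {for (Some x : sphere R n, t), continuous push}.
Proof.
move=> d0 W; have -> : push (Some x, t) = None by rewrite /push /= d0 eqxx.
move=> Winfty; have [r [r0 Wr]] := sphere_infty_nbhs_coord Winfty.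
have [e e0 escape] := push_escape_collapse r0.
have [t1 x_neg] : sval t = 1 /\ sg * x ord0 i0 <= 0.
  have := I01_le1 t; have : 0 <= Num.max (sg * x ord0 i0) 0 by rewrite le_max lexx orbT.
  have : sg * x ord0 i0 <= Num.max (sg * x ord0 i0) 0 by rewrite le_max lexx.
  by move: d0; rewrite /push_denom; lra.
exists (Some @` [set y : 'rV[R]_n | sg * y ord0 i0 < e], [set s : I01 | 1 - e < sval s]).
  have sg_cvg : (fun y : 'rV[R]_n => sg * y ord0 i0) @ nbhs x --> sg * x ord0 i0.
    by apply: cvgM; [exact: cvg_cst | exact: coord_continuous].
  have id_cvg : (fun r : R => r) @ nbhs (sval t) --> sval t by exact: cvg_id.
  split.
    by apply: one_point_compactification_some_nbhs; apply: (cvgr_lt _ sg_cvg); lra.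
  by apply: (@set_val_nbhs _ _ t (fun r => 1 - e < r)); apply: (cvgr_gt _ id_cvg); lra.
move=> [_ s] [/= [y ye <-] es]; rewrite /push /=.
case: eqP => [_|/eqP dn]; first exact: nbhs_singleton Winfty.
apply: (Wr _ i0); rewrite norm_push_vec_dir; apply: escape => //.
  by rewrite es I01_le1.
by rewrite lt0r dn push_denom_ge0.
Qed.

Lemma push_continuous_infty (t : I01) : {for (None : sphere R n, t), continuous push}.
Proof.
move=> W Winfty; have [r [r0 Wr]] := sphere_infty_nbhs_coord Winfty.
exists ([set z : sphere R n |
    if z is Some v then exists j, r + 1 < `|v ord0 j| else True], setT).
  by split; [exact: sphere_infty_nbhs | exact: filterT].
move=> [[y|] s] [/= y_far _]; rewrite /push /=; last exact: nbhs_singleton Winfty.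
case: eqP => [_|/eqP dn]; first exact: nbhs_singleton Winfty.
have [j rj] := y_far; have [ji|ji] := eqVneq j i0; last first.
  by apply: (Wr _ j); rewrite push_vec_coord //; lra.
apply: (Wr _ i0); rewrite norm_push_vec_dir; apply: push_escape_far => //.
- by rewrite I01_ge0 I01_le1.
- by rewrite normrM sg_norm1 mul1r -ji.
- by rewrite lt0r dn push_denom_ge0.
Qed.

Lemma push_continuous : continuous push.
Proof.
move=> [[x|] t]; last exact: push_continuous_infty.
have [d0|d0] := eqVneq (push_denom x (sval t)) 0.
  exact: push_continuous_collapse.
exact: push_continuous_finite.
Qed.

Lemma push_at0 (x : sphere R n) (t : I01) : sval t = 0 -> push (x, t) = x.
Proof.
move=> t0; case: x => [x|] //; rewrite /push /= /push_denom t0 subr0.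
have m0 : 0 <= Num.max (sg * x ord0 i0) 0 by rewrite le_max lexx orbT.
case: eqP => [d0|_]; first by exfalso; lra.
by rewrite /push_vec mul0r mulr0 scale0r subr0.
Qed.

Lemma push_at1 (x : 'rV[R]_n) (t : I01) :
  sval t = 1 -> sg * x ord0 i0 <= 0 -> push (Some x, t) = None.
Proof.
move=> t1 x_neg; rewrite /push /= /push_denom t1 subrr add0r.
by rewrite (max_idPr x_neg) eqxx.
Qed.
End PushHomotopy.

Lemma push_at1_opposite (R : realType) (n : nat) (i0 : 'I_n) (x : sphere R n)
    (t : set_type (`[0, 1]%classic : set R)) :
  sval t = 1 -> push i0 1 (x, t) = None \/ push i0 (-1) (x, t) = None.
Proof.
move=> t1; case: x => [x|]; last by left.
have [x_neg|x_pos] := lerP (x ord0 i0) 0.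
  by left; apply: push_at1; rewrite // mul1r.
by right; apply: push_at1; rewrite // mulN1r oppr_le0 ltW.
Qed.

Lemma smash_pair_basel (Y Z : topologicalType) (y0 : Y) (z0 : Z) z :
  smash_pair y0 z0 y0 z = smash_pt y0 z0.
Proof. by apply/eqquotP/asboolP; right; split; left. Qed.

Lemma smash_pair_baser (Y Z : topologicalType) (y0 : Y) (z0 : Z) y :
  smash_pair y0 z0 y z0 = smash_pt y0 z0.
Proof. by apply/eqquotP/asboolP; right; split; right. Qed.

Section Configurations.
Variables (T : finType) (M X : topologicalType) (x0 : X).

Lemma mem_Sset1 (D : {set T}) t : (t \in Sset [:: D]) = (t \in D).
Proof. by rewrite /Sset big_cons big_nil finset.setU0. Qed.

Lemma mem_Sset3 (D1 D2 D3 : {set T}) t :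
  (t \in Sset [:: D1; D2; D3]) = [|| t \in D1, t \in D2 | t \in D3].
Proof. by rewrite /Sset !big_cons big_nil finset.setU0 !inE. Qed.

Lemma Fraw_inj (Is : seq {set T}) (u : Fraw M X Is) : injective (val u).1.
Proof. by have := valP u; rewrite in_setE. Qed.

Lemma Fraw_pos_continuous (Is : seq {set T}) (i : Slab Is) :
  continuous (fun u : Fraw M X Is => (val u).1 i).
Proof.
move=> u; apply: (@cvg_comp _ _ _ set_val (fun c : conf_raw M X Is => c.1 i)).
  exact: initial_continuous.
apply: (@cvg_comp _ _ _ fst (fun f => f i)); first exact: cvg_fst.
exact: (@proj_continuous _ (fun=> M) i).
Qed.

Lemma Fraw_label_continuous (Is : seq {set T}) (i : Slab Is) :
  continuous (fun u : Fraw M X Is => (val u).2 i).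
Proof.
move=> u; apply: (@cvg_comp _ _ _ set_val (fun c : conf_raw M X Is => c.2 i)).
  exact: initial_continuous.
apply: (@cvg_comp _ _ _ snd (fun f => f i)); first exact: cvg_snd.
exact: (@proj_continuous _ (fun=> X) i).
Qed.

Lemma Dclass_continuous (Is : seq {set T}) : continuous (@Dclass T M X x0 Is).
Proof.
move=> u; apply: (@cvg_comp _ _ _ (existT (DrawFam M X Is) true) (\pi_(Dsp M x0 Is))).
  exact: (@existT_continuous _ (DrawFam M X Is) true u).
exact: (@pi_continuous (Draw M X Is) (Dsp M x0 Is)).
Qed.

Lemma Dclass_based (Is : seq {set T}) (u : Fraw M X Is) i :
  (val u).2 i = x0 -> Dclass x0 u = Dpt M x0 Is.
Proof. by move=> ux0; apply/eqquotP/asboolP; left; split => //=; exists i. Qed.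

Lemma perm_restrict (Is Js : seq {set T}) (hIJ : Sset Is \subset Sset Js)
    (s : {perm Slab Js}) :
  (forall j : Slab Is, val (s (lab_emb hIJ j)) \in Sset Is) ->
  exists s1 : {perm Slab Is}, forall j, lab_emb hIJ (s1 j) = s (lab_emb hIJ j).
Proof.
move=> sIs; pose f (j : Slab Is) : Slab Is := exist _ (val (s (lab_emb hIJ j))) (sIs j).
have f_inj : injective f.
  by move=> a b /(congr1 val) /= /val_inj /perm_inj; exact: lab_emb_inj.
by exists (perm f_inj) => j; apply: val_inj; rewrite permE.
Qed.

Section Relabel.
Variables (Y : topologicalType) (phi : X * Y -> X).

Definition relabel (Is : seq {set T}) (u : Fraw M X Is) (y : Y) : Fraw M X Is :=
  exist _ ((val u).1, fun i => phi ((val u).2 i, y)) (mem_set (@Fraw_inj Is u)).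

Definition restrict_relabel (Is Js : seq {set T}) (hIJ : Sset Is \subset Sset Js)
    (z : Fraw M X Js * Y) : Fraw M X Is :=
  relabel (restr hIJ z.1) z.2.

Lemma restrict_relabel_continuous (Is Js : seq {set T}) (hIJ : Sset Is \subset Sset Js) :
  continuous phi -> continuous (restrict_relabel hIJ).
Proof.
move=> phi_cont; apply: (@continuous_comp_initial _ _ _ set_val) => z.
pose pos (z : Fraw M X Js * Y) : {ptws Slab Is -> M} :=
  fun t => (val z.1).1 (lab_emb hIJ t).
pose label (z : Fraw M X Js * Y) : {ptws Slab Is -> X} :=
  fun t => phi ((val z.1).2 (lab_emb hIJ t), z.2).
have pos_cvg : pos @ nbhs z --> pos z.
  apply: ptws_cvg => t; apply: (@cvg_comp _ _ _ fst (fun u => (val u).1 (lab_emb hIJ t))).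
    exact: cvg_fst.
  exact: Fraw_pos_continuous.
have label_cvg : label @ nbhs z --> label z.
  apply: ptws_cvg => t.
  have lab_t : (fun z : Fraw M X Js * Y => (val z.1).2 (lab_emb hIJ t)) @ nbhs z -->
      (val z.1).2 (lab_emb hIJ t).
    apply: (@cvg_comp _ _ _ fst (fun u => (val u).2 (lab_emb hIJ t))); first exact: cvg_fst.
    exact: Fraw_label_continuous.
  apply: (@cvg_comp _ _ _
    (fun z : Fraw M X Js * Y => ((val z.1).2 (lab_emb hIJ t), z.2)) phi).
    exact: (cvg_pair lab_t cvg_snd).
  exact: phi_cont.
exact: (cvg_pair pos_cvg label_cvg).
Qed.

Lemma restrict_relabel_id (Is Js : seq {set T}) (hIJ : Sset Is \subset Sset Js)
    (u : Fraw M X Js) y :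
  (forall x, phi (x, y) = x) -> restrict_relabel hIJ (u, y) = restr hIJ u.
Proof. by move=> phi_id; apply: val_inj; congr pair; apply: funext => i; exact: phi_id. Qed.

Lemma Dclass_restrict_relabel_perm (D : {set T}) (Js : seq {set T})
    (hD : Sset [:: D] \subset Sset Js) (u v : Fraw M X Js) (s : {perm Slab Js}) y :
  (forall i, (val u).1 i = (val v).1 (s i) /\ (val u).2 i = (val v).2 (s i)) ->
  (forall i : Slab Js, (val (s i) \in D) = (val i \in D)) ->
  Dclass x0 (restrict_relabel hD (u, y)) = Dclass x0 (restrict_relabel hD (v, y)).
Proof.
move=> uv sD.
have sD1 (j : Slab [:: D]) : val (s (lab_emb hD j)) \in Sset [:: D].
  by rewrite mem_Sset1 sD -mem_Sset1; exact: (valP j).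
have [s1 s1E] := perm_restrict sD1.
apply/eqquotP/asboolP; right.
exists (restrict_relabel hD (u, y)), (restrict_relabel hD (v, y)), s1; split => //.
  move=> i I; rewrite mem_seq1 => /eqP ->.
  by rewrite -[val (s1 i)]/(val (lab_emb hD (s1 i))) s1E sD.
by move=> j /=; rewrite s1E; have [-> ->] := uv (lab_emb hD j).
Qed.
End Relabel.
End Configurations.

Section Deformation.
Variables (T : finType) (M X : topologicalType) (x0 : X) (A B C : {set T}).
Variables (Y : topologicalType) (phi1 phi2 : X * Y -> X).
Hypotheses (phi1_cont : continuous phi1) (phi2_cont : continuous phi2).
Hypotheses (phi1_x0 : forall y, phi1 (x0, y) = x0) (phi2_x0 : forall y, phi2 (x0, y) = x0).

Local Notation ABC := [:: A; B; C].
Local Notation DAB0 := (Dpt M x0 [:: A :|: B]).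
Local Notation DAC0 := (Dpt M x0 [:: A :|: C]).

Definition deform_raw (z : Fraw M X ABC * Y) : smash_target M x0 A B C :=
  smash_pair DAB0 DAC0 (Dclass x0 (restrict_relabel phi1 (subAB A B C) z))
    (Dclass x0 (restrict_relabel phi2 (subAC A B C) z)).

Definition deform (p : Draw M X ABC * Y) : smash_target M x0 A B C :=
  if Dcase p.1 is Some u then deform_raw (u, p.2) else target_pt M x0 A B C.

Lemma deform_raw_continuous : continuous deform_raw.
Proof.
move=> z.
have cAB : (fun z => Dclass x0 (restrict_relabel phi1 (subAB A B C) z)) @ nbhs z -->
    Dclass x0 (restrict_relabel phi1 (subAB A B C) z).
  apply: continuous_comp; last exact: Dclass_continuous.
  exact: restrict_relabel_continuous.
have cAC : (fun z => Dclass x0 (restrict_relabel phi2 (subAC A B C) z)) @ nbhs z -->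
    Dclass x0 (restrict_relabel phi2 (subAC A B C) z).
  apply: continuous_comp; last exact: Dclass_continuous.
  exact: restrict_relabel_continuous.
apply: (@cvg_comp _ _ _ (fun z => (Dclass x0 (restrict_relabel phi1 (subAB A B C) z),
    Dclass x0 (restrict_relabel phi2 (subAC A B C) z))) (\pi_(smash DAB0 DAC0))).
  exact: (cvg_pair cAB cAC).
exact: (@pi_continuous _ (smash DAB0 DAC0)).
Qed.

Lemma deform_continuous : continuous deform.
Proof.
apply: box_continuous => -[[] u] y W /= Wd.
- have [[U V] [/= nU nV] UV] := deform_raw_continuous Wd.
  exists (existT (DrawFam M X ABC) true @` U), V; split => //.
    exact: (@existT_nbhs _ (DrawFam M X ABC) true u U nU).
  by move=> _ y' [u' Uu' <-] Vy'; exact: (UV (u', y') (conj Uu' Vy')).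
- exists (existT (DrawFam M X ABC) false @` setT), setT; split.
  + exact: (@existT_nbhs _ (DrawFam M X ABC) false u setT filterT).
  + exact: filterT.
  + by move=> _ y' [u' _ <-] _ /=; exact: nbhs_singleton Wd.
Qed.

Lemma deform_raw_basel u y (i : Slab ABC) : val i \in A :|: B ->
  phi1 ((val u).2 i, y) = x0 -> deform_raw (u, y) = target_pt M x0 A B C.
Proof.
move=> iAB ux0; rewrite /deform_raw.
have jAB : val i \in Sset [:: A :|: B] by rewrite mem_Sset1.
pose j : Slab [:: A :|: B] := exist _ (val i) jAB.
have -> : Dclass x0 (restrict_relabel phi1 (subAB A B C) (u, y)) = DAB0.
  by apply: (Dclass_based (i := j)); rewrite /= (_ : lab_emb _ j = i) //; exact: val_inj.
exact: smash_pair_basel.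
Qed.

Lemma deform_raw_baser u y (i : Slab ABC) : val i \in A :|: C ->
  phi2 ((val u).2 i, y) = x0 -> deform_raw (u, y) = target_pt M x0 A B C.
Proof.
move=> iAC ux0; rewrite /deform_raw.
have jAC : val i \in Sset [:: A :|: C] by rewrite mem_Sset1.
pose j : Slab [:: A :|: C] := exist _ (val i) jAC.
have -> : Dclass x0 (restrict_relabel phi2 (subAC A B C) (u, y)) = DAC0.
  by apply: (Dclass_based (i := j)); rewrite /= (_ : lab_emb _ j = i) //; exact: val_inj.
exact: smash_pair_baser.
Qed.

Lemma deform_based (p : Draw M X ABC) y :
  based x0 p -> deform (p, y) = target_pt M x0 A B C.
Proof.
case: p => [[] u] //= [i ui]; have := valP i; rewrite mem_Sset3 orbA => /orP[iAB|iC].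
  by apply: (deform_raw_basel (i := i)); rewrite ?inE // ui.
by apply: (deform_raw_baser (i := i)); rewrite ?inE ?iC ?orbT // ui.
Qed.

Lemma deform_wd p q y : \pi_(Dsp M x0 ABC) p = \pi_(Dsp M x0 ABC) q ->
  deform (p, y) = deform (q, y).
Proof.
move=> /eqquotP /asboolP [[bp bq]|[u [v [s [pu qv s_col uv]]]]].
  by rewrite !deform_based.
have sA i : (val (s i) \in A) = (val i \in A) by apply: s_col; rewrite !inE eqxx.
have sB i : (val (s i) \in B) = (val i \in B) by apply: s_col; rewrite !inE eqxx orbT.
have sC i : (val (s i) \in C) = (val i \in C) by apply: s_col; rewrite !inE eqxx !orbT.
rewrite /deform pu qv /deform_raw /=; congr smash_pair.
  by apply: Dclass_restrict_relabel_perm uv _ => i; rewrite !inE sA sB.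
by apply: Dclass_restrict_relabel_perm uv _ => i; rewrite !inE sA sC.
Qed.

Lemma deform_mu q y : (forall x, phi1 (x, y) = x) -> (forall x, phi2 (x, y) = x) ->
  deform (repr q, y) = mu q.
Proof.
move=> phi1_id phi2_id; rewrite /deform /mu; case: (Dcase (repr q)) => // u.
by rewrite /deform_raw !restrict_relabel_id.
Qed.

Lemma deform_collapse p y (a : T) : a \in A ->
  (forall x, phi1 (x, y) = x0 \/ phi2 (x, y) = x0) -> deform (p, y) = target_pt M x0 A B C.
Proof.
move=> aA phi_x0; case: p => [[] u] //=.
have aABC : a \in Sset ABC by rewrite mem_Sset3 aA.
pose i : Slab ABC := exist _ a aABC.
case: (phi_x0 ((val u).2 i)) => ux0.
  by apply: (deform_raw_basel (i := i)); rewrite // inE aA.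
by apply: (deform_raw_baser (i := i)); rewrite // inE aA.
Qed.
End Deformation.

Close Scope classical_set_scope.
Unset Implicit Arguments.

Theorem lemma2p4 (R : realType) (d : nat) (M : topologicalType)
    (T : finType) (A B C : {set T}) (l : nat) :
  topological_manifold R d M -> (0 < l)%N ->
  [disjoint A & B] -> [disjoint A & C] -> [disjoint B & C] -> A != finset.set0 ->
  let s0 := sphere_pt R (2 * l) in
  exists H : (D_ABC M s0 A B C * set_type (`[0, 1]%classic : set R))%type ->
             smash_target M s0 A B C,
    [/\ continuous H,
        (forall q t, val t = 0 -> H (q, t) = @mu T M _ s0 A B C q),
        (forall q t, val t = 1 -> H (q, t) = target_pt M s0 A B C) &
        (forall t, H (Dpt M s0 [:: A; B; C], t) = target_pt M s0 A B C)].
Proof.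
move=> _ l_gt0 _ _ _ A_neq0 s0.
have n_gt0 : (0 < 2 * l)%N by rewrite muln_gt0.
pose i0 : 'I_(2 * l) := Ordinal n_gt0.
pose phi1 := push i0 (1 : R); pose phi2 := push i0 (-1 : R).
have phi1_cont : continuous phi1 by apply: push_continuous; rewrite normr1.
have phi2_cont : continuous phi2 by apply: push_continuous; rewrite normrN normr1.
exists (fun z => deform s0 phi1 phi2 (repr z.1, z.2)); split.
- apply: (quotient_prod_continuous (pi := \pi_(Dsp M s0 [:: A; B; C]))) => //.
  + exact: reprK.
  + exact: deform_continuous.
  + by move=> p p' t; apply: deform_wd.
- by move=> q t t0; apply: deform_mu => x; exact: push_at0.
- move=> q t t1; case/set0Pn: A_neq0 => a aA.
  by apply: (deform_collapse _ aA) => x; exact: push_at1_opposite.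
- by move=> t; rewrite (deform_wd _ _ _ (reprK _)).
Qed.
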